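(* There exist topological spaces $K_1, K_2, K_3$, a continuous map $f: K_1 \to K_2$, and closed subsets $R \subseteq K_1 \times K_3$, $S \subseteq K_2 \times K_3$ such that $$\overline{f_!}(R \cap f^*S) \neq \overline{f_!}R \cap S,$$ where $\overline{f_!}T := \mathrm{cl}(f_!T)$ denotes the closure in $K_2 \times K_3$ of the pushforward.
   Context: For a map $f: A \to B$ and relations $T \subseteq A \times C$, $U \subseteq B \times C$: $f_!T = \{(y,z) \in B \times C : \exists x \in A,\ f(x) = y,\ (x,z) \in T\}$ and $f^*U = \{(x,z) \in A \times C : (f(x), z) \in U\}$. Spaces need not be compact (e.g. the paper's setting allows $K_1$ non-closed in a simplex). *)

From HB Require Import structures.
From mathcomp Require Import all_boot all_order all_algebra.
From mathcomp Require Import all_classical all_reals all_analysis.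
Set Implicit Arguments. Unset Strict Implicit. Unset Printing Implicit Defensive.
Local Open Scope classical_set_scope.

Definition rel_push {A B C : Type} (f : A -> B) (T : set (A * C)) : set (B * C) :=
  [set p | exists x : A, f x = p.1 /\ T (x, p.2)].

Definition rel_pull {A B C : Type} (f : A -> B) (U : set (B * C)) : set (A * C) :=
  [set p | U (f p.1, p.2)].

Definition rel_push_cl {A : Type} {B C : topologicalType} (f : A -> B)
  (T : set (A * C)) : set (B * C) := closure (rel_push f T).

From mathcomp Require Import all_boot all_order all_algebra.
From mathcomp Require Import all_classical all_reals all_analysis.
From mathcomp Require Import Rstruct Rstruct_topology.
Import GRing.Theory Num.Theory numFieldNormedType.Exports.
Local Open Scope classical_set_scope.

(* On the level of sets the projection formula f_!(R ∩ f^*S) = f_!R ∩ S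
   holds; it is the closure that breaks it.  Take R full, so that
   f_!R = range f × K3, and S = {y} × K3 for a point y of the closure of
   range f that is not in range f.  Then R ∩ f^*S is empty, while
   cl(f_!R) ∩ S contains all of {y} × K3.  The map n ↦ 1/(n+1) from the
   discrete space of naturals to the reals, with y = 0, is such a map. *)

Section relations.
Context {A B C : Type} (f : A -> B).

Lemma rel_push_setI_rel_pull (T : set (A * C)) (U : set (B * C)) :
  rel_push f (T `&` rel_pull f U) = rel_push f T `&` U.
Proof.
apply/seteqP; split=> -[y z].
- by move=> [x [/= <- [Txz Ufxz]]]; split => //; exists x.
- by move=> [[x [/= <- Txz]] Ufxz]; exists x.
Qed.

Lemma rel_push_setT : rel_push f [set: A * C] = fst @^-1` range f.
Proof.
by apply/seteqP; split=> [[y z] [x [fxy _]]|[y z] [x _ fxy]]; exists x.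
Qed.

End relations.

Lemma image_closure_continuous {S T : topologicalType} (g : S -> T)
    (E : set S) :
  continuous g -> g @` closure E `<=` closure (g @` E).
Proof.
move=> cg _ [x clEx <-] N /cg gN.
have [e [Ee Ne]] := clEx _ gN.
by exists (g e); split => //; exists e.
Qed.

Lemma closure_preimage_fst {B C : topologicalType} (E : set B) (y : B)
    (z : C) :
  closure E y -> closure (fst @^-1` E) (y, z).
Proof.
move=> clEy; have cont_pair : continuous (fun b : B => (b, z)).
  by move=> b; apply: cvg_pair; [exact: cvg_id | exact: cvg_cst].
have := image_closure_continuous _ E cont_pair (y, z)
  (ex_intro2 _ _ y clEy erefl).
by apply: closureS => _ [b Eb <-].
Qed.

Lemma rel_push_cl_setI_rel_pull_neq {A : Type} {B C : topologicalType}
    (f : A -> B) (y : B) (z : C) :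
  closure (range f) y -> ~ range f y ->
  rel_push_cl f ([set: A * C] `&` rel_pull f (fst @^-1` [set y])) <>
  rel_push_cl f [set: A * C] `&` fst @^-1` [set y].
Proof.
move=> cl_y not_range_y.
rewrite /rel_push_cl rel_push_setI_rel_pull rel_push_setT.
have -> : fst @^-1` range f `&` fst @^-1` [set y] = set0 :> set (B * C).
  by apply/seteqP; split => // -[b c] [/= range_b b_y]; rewrite b_y in range_b.
rewrite closure0 => set0_eq.
suff : (set0 : set (B * C)) (y, z) by [].
by rewrite set0_eq; split => //; exact: closure_preimage_fst.
Qed.

Section harmonic_range.
Context {R : realType}.
Local Open Scope ring_scope.

Lemma zero_notin_range_harmonic : ~ range (@harmonic R) 0.
Proof. by move=> [n _ /eqP]; rewrite /harmonic /= invr_eq0 pnatr_eq0. Qed.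

Lemma closure_range_harmonic : closure (range (@harmonic R)) 0.
Proof.
have range_near :
    \forall n \near \oo, closure (range (@harmonic R)) (harmonic n).
  by apply: nearW => n; apply: subset_closure; exists n.
exact: (closed_cvg _ (@closed_closure _ _) range_near _ (@cvg_harmonic R)).
Qed.

End harmonic_range.

Theorem mainTheorem10 :
  exists (K1 K2 K3 : topologicalType) (f : K1 -> K2)
         (R : set (K1 * K3)) (S : set (K2 * K3)),
    continuous f /\ closed R /\ closed S /\
    rel_push_cl f (R `&` rel_pull f S) <> rel_push_cl f R `&` S.
Proof.
exists nat, Rdefinitions.R, Rdefinitions.R, harmonic, setT,
  (fst @^-1` [set 0%R]).
split; first by apply/continuousP => U _; exact: discrete_open.
split; first exact: closedT.
split.
  apply: preimage_closed; last exact: closed_eq.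
  by move=> p _; exact: cvg_fst.
exact: (rel_push_cl_setI_rel_pull_neq (C := Rdefinitions.R) _ _ 0%R
  closure_range_harmonic zero_notin_range_harmonic).
Qed.
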